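(* Let $n\geq 3$, $q\geq 1$ with $\gcd(q,n-1)=1$, $k=-n+\frac{n-1}{q}$, $\beta_0=q\delta-\theta$, and let $\sigma:(\widehat W,S)\to(\widehat W(k\Lambda_0),S(k\Lambda_0))$ be the Coxeter isomorphism with $\sigma(s_{\alpha_0})=s_{\beta_0}$ and $\sigma(s_{\alpha_i})=s_{\alpha_i}$ for $1\leq i\leq n-1$. Then for every $\gamma$ in the root lattice $Q$ of $sl_n$, $\sigma(t_\gamma)=t_{q\gamma}$.
   Context: Affine $\widehat{sl}_n$ with simple roots $\alpha_0=\delta-\theta,\alpha_1,\dots,\alpha_{n-1}$, invariant form $(\cdot|\cdot)$, reflections $s_\alpha$; $\widehat W$ the affine Weyl group, $S=\{s_{\alpha_i}\}$; $\widehat W(k\Lambda_0)$ is the group generated by reflections in real roots $\alpha$ with $(k\Lambda_0+\widehat\rho|\alpha^\vee)\in\mathbb Z$, with simple reflections $S(k\Lambda_0)=\{s_{\beta_0},s_{\alpha_1},\dots,s_{\alpha_{n-1}}\}$. For $\gamma\in\mathfrak h^*$, $t_\gamma$ is the linear map $t_\gamma(\lambda)=\lambda+(\lambda|\delta)\gamma-\big((\lambda|\gamma)+\frac12(\lambda|\delta)(\gamma|\gamma)\big)\delta$ on $\widehat{\mathfrak h}^*$; for $\gamma\in Q$ one has $t_\gamma\in\widehat W$ and $t_{q\gamma}\in\widehat W(k\Lambda_0)$. *)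

From HB Require Import structures.
From mathcomp Require Import all_boot all_order all_algebra.
Set Implicit Arguments. Unset Strict Implicit. Unset Printing Implicit Defensive.
Import Order.TTheory GRing.Theory Num.Theory.
Local Open Scope ring_scope.

(* Model of hat(h)^* for affine sl_n (rational form; all maps involved have
   rational coefficients).  An element (x, a, b) stands for x + a Λ0 + b δ,
   where x ∈ h^* is a row vector of coordinates w.r.t. ε_1..ε_n; the actual
   h^* of sl_n is the hyperplane {sum x = 0} (see [in_hhat]). *)
Definition hh (n : nat) := ('rV[rat]_n * rat * rat)%type.

Definition hadd n (l m : hh n) : hh n := (l.1.1 + m.1.1, l.1.2 + m.1.2, l.2 + m.2).
Definition hscale n (c : rat) (l : hh n) : hh n := (c *: l.1.1, c * l.1.2, c * l.2).

Definition hform n (l m : hh n) : rat :=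
  \sum_(i < n) l.1.1 0 i * m.1.1 0 i + l.1.2 * m.2 + l.2 * m.1.2.

Definition in_hhat n (l : hh n) : Prop := \sum_(i < n) l.1.1 0 i = 0.

Definition delta n : hh n := (0, 0, 1).
Definition ofh n (x : 'rV[rat]_n) : hh n := (x, 0, 0).

Definition theta n : 'rV[rat]_n := \row_j (((j : nat) == 0%N)%:R - ((j : nat) == n.-1)%:R).
(* α_i = ε_i - ε_{i+1}, 1 <= i <= n-1 (0-based coordinates i-1 and i) *)
Definition alpha n (i : nat) : 'rV[rat]_n := \row_j (((j : nat) == i.-1)%:R - ((j : nat) == i)%:R).

Definition refl n (a l : hh n) : hh n :=
  hadd l (hscale (- (2 * hform l a / hform a a)) a).

Definition alphahat n (i : nat) : hh n :=
  if i == 0%N then hadd (delta n) (ofh (- theta n)) else ofh (alpha n i).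

Definition beta0 n (q : nat) : hh n := hadd (hscale q%:R (delta n)) (ofh (- theta n)).

(* roots whose reflections are σ(s_{α_i}): β_0 for i = 0, α_i otherwise *)
Definition sigma_root n (q : nat) (i : nat) : hh n :=
  if i == 0%N then beta0 n q else alphahat n i.

Definition word_act n (r : nat -> hh n) (w : seq nat) (l : hh n) : hh n :=
  foldr (fun i l' => refl (r i) l') l w.

Definition transl n (g : 'rV[rat]_n) (l : hh n) : hh n :=
  hadd (hadd l (hscale (hform l (delta n)) (ofh g)))
       (hscale (- (hform l (ofh g) + 2^-1 * hform l (delta n) * hform (ofh g) (ofh g)))
               (delta n)).

Definition root_lattice n (g : 'rV[rat]_n) : Prop :=
  exists c : nat -> int, g = \sum_(1 <= i < n) (c i)%:~R *: alpha n i.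

From mathcomp Require Import all_boot all_order all_algebra.
From mathcomp Require Import ring.
Set Implicit Arguments. Unset Strict Implicit. Unset Printing Implicit Defensive.
Import GRing.Theory Num.Theory.
Local Open Scope ring_scope.

(* sigma is conjugation by the linear isometry [dscale q] of hat(h)^*, which
   fixes h^* and sends Lambda_0 to Lambda_0 / q and delta to q delta.  It maps
   alpha_0 = delta - theta to beta_0 = q delta - theta and fixes the other
   simple roots, so it intertwines s_{alpha_i} with sigma(s_{alpha_i}); and a
   direct computation gives [dscale q] t_gamma [dscale q]^-1 = t_{q gamma}.
   Only q <> 0 is needed: coprimality of q and n - 1 and gamma in Q are what
   make sigma a Coxeter isomorphism and t_gamma an element of hat(W), but the
   identity itself does not use them. *)

Definition dscale {n} (q : rat) (l : hh n) : hh n := (l.1.1, l.1.2 / q, q * l.2).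

Lemma hform_delta n (l : hh n) : hform l (delta n) = l.1.2.
Proof.
rewrite /hform big1 ?add0r ?mulr1 ?mulr0 ?addr0 // => i _.
by rewrite mxE mulr0.
Qed.

Lemma hform_ofh n (l : hh n) (x : 'rV[rat]_n) :
  hform l (ofh x) = \sum_(i < n) l.1.1 0 i * x 0 i.
Proof. by rewrite /hform !mulr0 !addr0. Qed.

Lemma dscale_alphahat n (q i : nat) :
  dscale q%:R (alphahat n i) = sigma_root n q i.
Proof.
rewrite /sigma_root /alphahat /beta0 /dscale /hadd /hscale /delta /ofh /=.
by case: (i == 0%N); congr (_, _, _); rewrite ?scaler0 ?mul0r ?mulr0 ?mulr1 ?addr0.
Qed.

Section Dilation.
Variables (n : nat) (q : rat).
Hypothesis q_neq0 : q != 0.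

Lemma dscaleK (l : hh n) : dscale q (dscale q^-1 l) = l.
Proof. by case: l => [[x a] b]; rewrite /dscale /=; congr (_, _, _); field. Qed.

Lemma hform_dscale (l m : hh n) : hform (dscale q l) (dscale q m) = hform l m.
Proof.
case: l => [[x a] b]; case: m => [[y c] d]; rewrite /hform /=.
by congr (_ + _ + _); field.
Qed.

Lemma dscale_refl (a l : hh n) :
  dscale q (refl a l) = refl (dscale q a) (dscale q l).
Proof.
rewrite /refl !hform_dscale; move: (- _) => c.
case: l => [[x a1] b]; case: a => [[y c1] d]; rewrite /dscale /hadd /hscale /=.
by congr (_, _, _); [rewrite mulrDl mulrA | rewrite mulrDr mulrCA].
Qed.

Lemma dscale_word_act (r r' : nat -> hh n) (w : seq nat) (l : hh n) :
  (forall i, dscale q (r i) = r' i) ->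
  dscale q (word_act r w l) = word_act r' w (dscale q l).
Proof.
move=> r_r'; elim: w => [|i w IHw] //=.
by rewrite dscale_refl IHw r_r'.
Qed.

Lemma dscale_transl (g : 'rV[rat]_n) (l : hh n) :
  dscale q (transl g l) = transl (q *: g) (dscale q l).
Proof.
rewrite /transl !hform_delta !hform_ofh.
have sum_scaler (x y : 'rV[rat]_n) :
    \sum_(i < n) x 0 i * (q *: y) 0 i = q * \sum_(i < n) x 0 i * y 0 i.
  by rewrite big_distrr; apply: eq_bigr => i _; rewrite mxE mulrCA.
have sum_scalel (x y : 'rV[rat]_n) :
    \sum_(i < n) (q *: x) 0 i * y 0 i = q * \sum_(i < n) x 0 i * y 0 i.
  by rewrite big_distrr; apply: eq_bigr => i _; rewrite mxE -mulrA.
rewrite /ofh /= !sum_scaler sum_scalel.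
case: l => [[x a] b]; rewrite /dscale /hadd /hscale /ofh /delta /=.
move: (\sum_(i < n) x 0 i * g 0 i) (\sum_(i < n) g 0 i * g 0 i) => S T.
congr (_, _, _); last by field.
- by rewrite !scaler0 !addr0 scalerA divfK.
- by rewrite !mulr0 !addr0.
Qed.

End Dilation.

Theorem mainTheorem7 (n q : nat) (hn : (3 <= n)%N) (hq : (0 < q)%N)
  (hcop : coprime q n.-1) (k : rat) (hk : k = - n%:R + n.-1%:R / q%:R)
  (g : 'rV[rat]_n) (hg : root_lattice g) (w : seq nat)
  (hw : all (fun i => (i < n)%N) w)
  (ht : forall l : hh n, in_hhat l -> word_act (@alphahat n) w l = transl g l) :
  forall l : hh n, in_hhat l -> word_act (sigma_root n q) w l = transl (q%:R *: g) l.
Proof.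
move=> l hl.
have q_neq0 : (q%:R : rat) != 0 by rewrite pnatr_eq0 -lt0n.
rewrite -(dscaleK q_neq0 l) -(dscale_word_act q_neq0 _ _ (@dscale_alphahat n q)).
by rewrite ht // dscale_transl.
Qed.
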